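(* Let $p \geqslant 3$ be a prime and $d \geqslant 1$ with $p^d \geqslant 7$, and let $V$ be a $d$-dimensional vector space over $\mathbb{F}_p$ with basis $\mathbf{b}_1,\ldots,\mathbf{b}_d$. Let $G = \mathrm{Sym}(V)$, let $\mu$ be a primitive element of $\mathbb{F}_p$, and for each $j$ let $g_j \in \mathrm{GL}(V)$ send $\mathbf{b}_j$ to $\mu\mathbf{b}_j$ and fix $\mathbf{b}_l$ for $l \neq j$; let $T = \langle g_1,\ldots,g_d\rangle$ be the group of diagonal matrices with respect to this basis. Let $i \in \{1,\ldots,d\}$ and let $a$ be a positive divisor of $p-1$ with $(p,a) \neq (5,2)$. Then there exists $x \in G$ such that \[ T \cap T^x = \langle g_1,\ldots,g_{i-1}, g_i^{a}, g_{i+1},\ldots,g_d\rangle. \]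
   Context: $\mathrm{GL}(V)$ is regarded as a subgroup of $\mathrm{Sym}(V)$. *)

From HB Require Import structures.
From mathcomp Require Import all_boot all_order all_algebra all_fingroup.
Set Implicit Arguments. Unset Strict Implicit. Unset Printing Implicit Defensive.
Import GRing.Theory.
Local Open Scope ring_scope.

(* The coordinate space V = F^d (row vectors), with standard basis b_1..b_d
   (indexed by 'I_d, i.e. 0..d-1). *)

Definition diag_scale_fun (F : finFieldType) (d : nat) (u : {unit F}) (j : 'I_d)
  (v : 'rV[F]_d) : 'rV[F]_d :=
  \row_k (if k == j then val u * v 0 k else v 0 k).

Lemma diag_scale_inj (F : finFieldType) (d : nat) (u : {unit F}) (j : 'I_d) :
  injective (diag_scale_fun u j).
Proof.
apply: (can_inj (g := diag_scale_fun (u^-1)%g j)) => v.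
apply/rowP => k; rewrite /diag_scale_fun !mxE.
case: eqP => [->|_] //; rewrite mulrA.
by have := (mulVg u); move/(congr1 val) => /= ->; rewrite mul1r.
Qed.

Definition diag_gen (F : finFieldType) (d : nat) (u : {unit F}) (j : 'I_d)
  : {perm 'rV[F]_d} := perm (@diag_scale_inj F d u j).

Definition diagT (F : finFieldType) (d : nat) (u : {unit F})
  : {set {perm 'rV[F]_d}} :=
  <<[set diag_gen u j | j : 'I_d]>>%g.

Definition diagT_mod (F : finFieldType) (d : nat) (u : {unit F}) (i : 'I_d) (a : nat)
  : {set {perm 'rV[F]_d}} :=
  <<[set (if j == i then (diag_gen u j ^+ a)%g else diag_gen u j) | j : 'I_d]>>%g.

Arguments diagT {F d} u.
Arguments diagT_mod {F d} u i a.

(* Let x act on the i-th coordinate only, by a bijection sg of F_p, and write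
   c for mu.  A diagonal element diag(c^m_1, ..., c^m_d) of T lies in T^x iff
   sg (c^M' y) = c^(m_i) sg y for all y and some M'.  So it suffices to find sg
   commuting with multiplication by every a-th power of c, and such that any
   such twisted commutation forces a | m_i.  For a = p - 1 take sg y = y + 1
   (evaluate at y = 0).  Otherwise let sg multiply by c^a the elements of the
   subgroup <c^a> (the ((p-1)/a)-th roots of unity) and fix everything else; on
   exponents sg is j |-> j + [a | j] a mod p - 1, and evaluating the twisted
   commutation at 1, c and c^2 shows a | m_i unless p - 1 = 4 and a = 2. *)

From HB Require Import structures.
From mathcomp Require Import all_boot all_order all_algebra all_fingroup zify.
Set Implicit Arguments. Unset Strict Implicit. Unset Printing Implicit Defensive.
Import GRing.Theory.

Lemma dvdn_mod_addr n x z : x + z = x %[mod n] -> n %| z.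
Proof. by move/eqP; rewrite -{2}[x]addn0 eqn_modDl mod0n. Qed.

Lemma dvdn_eq_mod n a x y : a %| n -> x = y %[mod n] -> (a %| x) = (a %| y).
Proof. by move=> a_n xy; rewrite /dvdn -(modn_dvdm x a_n) xy modn_dvdm. Qed.

Definition add_on_mult (a j : nat) : nat := j + (if a %| j then a else 0).

Lemma add_on_mult_id a j : ~~ (a %| j) -> add_on_mult a j = j.
Proof. by rewrite /add_on_mult => /negbTE ->; rewrite addn0. Qed.

Lemma dvdn_add_on_mult a j : (a %| add_on_mult a j) = (a %| j).
Proof. by rewrite /add_on_mult; case: ifP => aj; rewrite ?addn0 ?dvdn_addl. Qed.

Lemma add_on_mult_mod n a x y : a %| n -> x = y %[mod n] ->
  add_on_mult a x = add_on_mult a y %[mod n].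
Proof. by move=> a_n xy; rewrite /add_on_mult (dvdn_eq_mod a_n xy) -modnDml xy modnDml. Qed.

Lemma add_on_mult_rigid n a M M' : a %| n -> a < n -> (n, a) != (4, 2) ->
  (forall j, M + add_on_mult a j = add_on_mult a (M' + j) %[mod n]) -> a %| M.
Proof.
move=> a_n lt_an n42 twist; apply/idPn => aM.
have a_gt0 : 0 < a by apply: dvdn_gt0 a_n; lia.
have n_ndvd_a : ~~ (n %| a) by apply/negP => /(dvdn_leq a_gt0); lia.
have aM' : ~~ (a %| M').
  have := dvdn_eq_mod a_n (twist 0); rewrite addn0 dvdn_add_on_mult /add_on_mult dvdn0.
  by rewrite add0n (dvdn_addl _ (dvdnn a)) (negbTE aM) => <-.
have {aM'} twist j : M + add_on_mult a j = add_on_mult a (M + a + j) %[mod n].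
  rewrite twist; apply: add_on_mult_mod a_n _; rewrite -[RHS]modnDml.
  have := twist 0; rewrite addn0 (add_on_mult_id aM') /add_on_mult dvdn0 add0n => ->.
  by rewrite modnDml.
have a_shift j : ~~ (a %| j) -> a %| M + a + j.
  move=> aj; apply: contraR n_ndvd_a => aMaj; apply: (@dvdn_mod_addr _ (M + j)).
  by have := twist j; rewrite (add_on_mult_id aj) (add_on_mult_id aMaj) => ->; rewrite addnAC.
have a_neq1 : a != 1 by apply: contraNneq aM => ->; apply: dvd1n.
have a_M1 : a %| M + a + 1 by apply: a_shift; rewrite dvdn1.
have n_2a : n %| a * 2.
  apply: (@dvdn_mod_addr _ (M + 1)); have := twist 1.
  by rewrite add_on_mult_id ?dvdn1 // /add_on_mult a_M1 => ->; congr (_ %% _); lia.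
have a2 : a = 2.
  suff : a <= 2 by lia.
  rewrite leqNgt; apply/negP => lt2a.
  have /a_shift : ~~ (a %| 2) by rewrite gtnNdvd.
  have -> : M + a + 2 = M + a + 1 + 1 by lia.
  by rewrite dvdn_addr // dvdn1 (negbTE a_neq1).
have : n <= a * 2 by apply: dvdn_leq n_2a; lia.
by move: n42 a_n; rewrite a2 xpair_eqE eqxx andbT; lia.
Qed.

Local Open Scope ring_scope.

Section DiagonalGroups.
Variables (F : finFieldType) (d : nat) (u : {unit F}).

Definition diag_pow (m : 'I_d -> nat) (v : 'rV[F]_d) : 'rV[F]_d :=
  \row_k (val u ^+ m k * v 0 k).

Lemma diag_genXE j n v :
  (diag_gen u j ^+ n)%g v = diag_pow (fun k => if k == j then n else 0%N) v.
Proof.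
elim: n v => [|n IH] v.
  by rewrite expg0 perm1; apply/rowP => k; rewrite !mxE if_same mul1r.
rewrite expgSr permM IH permE; apply/rowP => k; rewrite !mxE.
by case: eqP => _; rewrite // mulrA -exprS.
Qed.

Lemma prod_diag_genXE (f : 'I_d -> nat) (r : seq 'I_d) v : uniq r ->
  (\prod_(j <- r) diag_gen u j ^+ f j)%g v
    = diag_pow (fun k => if k \in r then f k else 0%N) v.
Proof.
elim: r v => [|j r IH] v /=.
  by move=> _; rewrite big_nil perm1; apply/rowP => k; rewrite !mxE mul1r.
case/andP => j_notin_r uniq_r; rewrite big_cons permM IH // diag_genXE.
apply/rowP => k; rewrite !mxE in_cons.
by case: (eqVneq k j) => [->|_] /=; rewrite ?(negbTE j_notin_r) expr0 mul1r.
Qed.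

Lemma mem_gen_diag_genX (e : 'I_d -> nat) s :
  s \in <<[set diag_gen u j ^+ e j | j : 'I_d]>>%g <->
  exists2 m : 'I_d -> nat, (forall k, e k %| m k)%N & s =1 diag_pow m.
Proof.
split.
  case/gen_prodgP => n [c c_gen ->].
  elim: n c c_gen => [|n IH] c c_gen.
    exists (fun=> 0%N) => [k|v]; first exact: dvdn0.
    by rewrite big_ord0 perm1; apply/rowP => k; rewrite mxE mul1r.
  rewrite big_ord_recr /=.
  have [m e_m sE] := IH (fun k => c (widen_ord (leqnSn n) k)) (fun k => c_gen _).
  have /imsetP [j _ ->] := c_gen ord_max.
  exists (fun k => if k == j then m k + e j else m k)%N => [k|v].
    by case: eqP => [->|_]; rewrite ?dvdn_add.
  rewrite permM sE diag_genXE; apply/rowP => k; rewrite !mxE.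
  by case: eqP => [->|_]; rewrite ?mul1r // mulrA -exprD addnC.
case=> m e_m sE.
have -> : s = (\prod_(j <- enum 'I_d) diag_gen u j ^+ (e j * (m j %/ e j)))%g.
  apply/permP => v; rewrite prod_diag_genXE ?enum_uniq // sE.
  by apply/rowP => k; rewrite !mxE mem_enum mulnC divnK.
by apply: group_prod => j _; rewrite expgM groupX // mem_gen //; apply/imsetP; exists j.
Qed.

Lemma mem_diagT s :
  s \in diagT u <-> exists m : 'I_d -> nat, s =1 diag_pow m.
Proof.
rewrite /diagT -(eq_imset _ (fun j => expg1 (diag_gen u j))).
apply: (iff_trans (mem_gen_diag_genX (fun=> 1%N) s)).
by split=> [[m _ sE]|[m sE]]; exists m.
Qed.

Lemma mem_diagT_mod i a s :
  s \in diagT_mod u i a <->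
  exists2 m : 'I_d -> nat, (a %| m i)%N & s =1 diag_pow m.
Proof.
have -> : diagT_mod u i a =
    <<[set diag_gen u j ^+ (if j == i then a else 1%N) | j : 'I_d]>>%g.
  by congr <<_>>%g; apply: eq_imset => j; case: eqP; rewrite ?expg1.
apply: (iff_trans (mem_gen_diag_genX _ s)).
split=> [[m e_m sE]|[m a_m sE]]; exists m => //; first by have := e_m i; rewrite eqxx.
by move=> k; case: eqP => [->|].
Qed.

Lemma mem_diagT_conj x s :
  s \in (diagT u :^ x)%g <-> exists m : 'I_d -> nat, forall v, s (x v) = x (diag_pow m v).
Proof.
rewrite mem_conjg; apply: (iff_trans (mem_diagT _)).
by split=> [[m sE]|[m sE]]; exists m => v;
  rewrite -?sE conjgE invgK ?permM ?sE ?permK ?permKV.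
Qed.

Section CoordinatePermutation.
Variables (i : 'I_d) (sg : F -> F).
Hypothesis sg_inj : injective sg.

Definition coord_fun (v : 'rV[F]_d) : 'rV[F]_d :=
  \row_k (if k == i then sg (v 0 k) else v 0 k).

Lemma coord_fun_inj : injective coord_fun.
Proof.
move=> v w /rowP vw; apply/rowP => k; have := vw k; rewrite !mxE.
by case: eqP => // _; apply: sg_inj.
Qed.

Definition coord_perm : {perm 'rV[F]_d} := perm coord_fun_inj.

Lemma diagT_coord_perm a :
  (forall M, (a %| M)%N -> {morph sg : y / val u ^+ M * y}) ->
  (forall M M', {morph sg : y / val u ^+ M' * y >-> val u ^+ M * y} -> (a %| M)%N) ->
  (diagT u :&: diagT u :^ coord_perm)%g = diagT_mod u i a.
Proof.
move=> sg_morph sg_rigid; apply/setP => s; rewrite inE.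
apply/andP/idP => [[/mem_diagT [m sE] /mem_diagT_conj [m' sxE]] | ].
  apply/mem_diagT_mod; exists m => //; apply: (sg_rigid _ (m' i)) => y.
  have := sxE (\row_k (if k == i then y else 0)).
  by move/rowP/(_ i); rewrite sE !permE !mxE eqxx.
case/mem_diagT_mod => m a_m sE; split; first by apply/mem_diagT; exists m.
apply/mem_diagT_conj; exists m => v; rewrite sE !permE; apply/rowP => k.
by rewrite !mxE; case: eqP => [->|]; rewrite ?sg_morph.
Qed.

End CoordinatePermutation.

End DiagonalGroups.

Section MulOnRoots.
Variables (R : idomainType) (m : nat) (z : R).
Hypotheses (z_root : z ^+ m = 1) (z_neq0 : z != 0).

Definition mul_on_roots (y : R) : R := if y ^+ m == 1 then z * y else y.

Lemma mul_on_roots_morph w : w ^+ m = 1 -> {morph mul_on_roots : y / w * y}.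
Proof.
by move=> w_root y; rewrite /mul_on_roots exprMn w_root mul1r; case: ifP; rewrite // mulrCA.
Qed.

Lemma mul_on_roots_inj : injective mul_on_roots.
Proof.
have root_mulz y : ((z * y) ^+ m == 1) = (y ^+ m == 1) by rewrite exprMn z_root mul1r.
move=> x y; rewrite /mul_on_roots.
case: ifP => xm; case: ifP => ym; [exact: mulfI | | | by []] => exy.
- by move: ym; rewrite -exy root_mulz xm.
- by move: xm; rewrite exy root_mulz ym.
Qed.

End MulOnRoots.

Section PrimitiveRootRotation.
Variables (R : idomainType) (n a : nat) (c : R).
Hypotheses (prim : n.-primitive_root c) (a_n : (a %| n)%N).

Lemma expr_root_dvd j : ((c ^+ j) ^+ (n %/ a) == 1) = (a %| j)%N.
Proof.
have n_gt0 := prim_order_gt0 prim.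
have a_gt0 := dvdn_gt0 n_gt0 a_n.
rewrite -exprM -(prim_order_dvd prim) -{1}(divnK a_n) mulnC dvdn_pmul2r //.
by rewrite divn_gt0 // dvdn_leq.
Qed.

Local Notation rot := (mul_on_roots (n %/ a) (c ^+ a)).

Lemma rot_inj : injective rot.
Proof.
apply: mul_on_roots_inj; first by apply/eqP; rewrite expr_root_dvd.
apply: expf_neq0; apply/eqP => c0; move: (prim_expr_order prim).
rewrite c0 expr0n gtn_eqF ?(prim_order_gt0 prim) // => /eqP.
by rewrite mulr0n eq_sym oner_eq0.
Qed.

Lemma rot_morph M : (a %| M)%N -> {morph rot : y / c ^+ M * y}.
Proof. by move=> a_M; apply: mul_on_roots_morph; apply/eqP; rewrite expr_root_dvd. Qed.

Lemma rot_expr j : rot (c ^+ j) = c ^+ add_on_mult a j.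
Proof.
by rewrite /mul_on_roots expr_root_dvd /add_on_mult; case: ifP; rewrite ?addn0 // exprD mulrC.
Qed.

Lemma rot_rigid M M' : (a < n)%N -> (n, a) != (4, 2)%N ->
  {morph rot : y / c ^+ M' * y >-> c ^+ M * y} -> (a %| M)%N.
Proof.
move=> lt_an n42 rotM; apply: add_on_mult_rigid a_n lt_an n42 _ => j.
apply/eqP; rewrite -(eq_prim_root_expr prim) exprD -(rot_expr j) -rotM -exprD.
by rewrite rot_expr.
Qed.

End PrimitiveRootRotation.

Theorem lemma3p6 (p d : nat) (mu : {unit 'F_p}) (i : 'I_d) (a : nat) :
  prime p -> (3 <= p)%N -> (1 <= d)%N -> (7 <= p ^ d)%N ->
  ((p.-1).-primitive_root (val mu))%R ->
  (0 < a)%N -> (a %| p.-1)%N -> (p, a) != (5%N, 2%N) ->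
  exists x : {perm 'rV['F_p]_d},
    (diagT mu :&: (diagT mu :^ x))%g = diagT_mod mu i a.
Proof.
move=> _ p_ge3 _ _ prim _ a_n pa.
case: (eqVneq a p.-1) => [-> | a_neq].
  exists (coord_perm i (@addIr _ 1)); apply: diagT_coord_perm => [M | M M' sgM].
    by rewrite (prim_order_dvd prim) => /eqP muM y; rewrite muM !mul1r.
  by rewrite (prim_order_dvd prim); have := sgM 0; rewrite !mulr0 add0r mulr1 => <-.
exists (coord_perm i (rot_inj prim a_n)); apply: diagT_coord_perm => [M|M M'].
  exact: rot_morph.
apply: rot_rigid => //.
  by rewrite ltn_neqAle a_neq dvdn_leq // (prim_order_gt0 prim).
by apply: contra pa; rewrite !xpair_eqE => /andP [/eqP n4 ->]; rewrite andbT; apply/eqP; lia.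
Qed.
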